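(* Every admissible Poisson algebra $(\mathcal{P},\cdot)$ is power associative: for every $X\in\mathcal{P}$, defining $X^1=X$ and $X^{i+1}=X\cdot X^i$, one has $X^i\cdot X^j=X^{i+j}$ for all $i,j\ge 1$; in particular the subalgebra generated by any single element is associative.
   Context: $\mathbb{K}$ is a field of characteristic different from $2$ and $3$. For a bilinear product $\cdot$ on $\mathcal{P}$, its associator is $A(X,Y,Z)=(X\cdot Y)\cdot Z-X\cdot(Y\cdot Z)$. An admissible Poisson algebra is a $\mathbb{K}$-vector space $\mathcal{P}$ with a bilinear product $\cdot$ (not assumed associative) satisfying, for all $X,Y,Z$, $3A(X,Y,Z)=(X\cdot Z)\cdot Y+(Y\cdot Z)\cdot X-(Y\cdot X)\cdot Z-(Z\cdot X)\cdot Y$. *)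

From mathcomp Require Import all_boot all_order all_algebra.
Set Implicit Arguments. Unset Strict Implicit. Unset Printing Implicit Defensive.
Import GRing.Theory.
Local Open Scope ring_scope.

Definition bilinear_prod (K : fieldType) (V : lmodType K) (mul : V -> V -> V) : Prop :=
  (forall (a : K) (x y z : V), mul (a *: x + y) z = a *: mul x z + mul y z) /\
  (forall (a : K) (x y z : V), mul x (a *: y + z) = a *: mul x y + mul x z).

Definition admissible_poisson (K : fieldType) (V : lmodType K) (mul : V -> V -> V) : Prop :=
  bilinear_prod mul /\
  forall x y z : V,
    3%:R *: (mul (mul x y) z - mul x (mul y z)) =
      mul (mul x z) y + mul (mul y z) x - mul (mul y x) z - mul (mul z x) y.

(* Right-nested powers, shifted by one: npow mul X k = X^(k+1), with
   X^1 = X and X^(i+1) = X . X^i. *)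
Fixpoint npow (V : Type) (mul : V -> V -> V) (X : V) (k : nat) : V :=
  match k with
  | 0 => X
  | k'.+1 => mul X (npow mul X k')
  end.

From mathcomp Require Import all_boot all_order all_algebra.
Set Implicit Arguments. Unset Strict Implicit. Unset Printing Implicit Defensive.
Import GRing.Theory.
Local Open Scope ring_scope.

(* Induction on m = i + j.  Write d(i, j) := X^i X^j - X^(i+j) and assume all
   defects of total degree < m + 2 vanish.  The admissible identity applied to
   (X, X^(a+1), X^(b+1)), a + b = m, collapses to 3 d(a+2, b+1) =
   d(m+2, 1) - d(a+2, b+1), i.e. 4 d(a+2, b+1) = d(m+2, 1).  Taking a = m
   gives 3 d(m+2, 1) = 0, and then 4 d(a+2, b+1) = 0 for every split of m.
   With the shifted indexing of [npow], d(i+1, j+1) is [npow_defect i j]. *)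

Section PowerAssociativity.

Variables (K : fieldType) (P : lmodType K) (mul : P -> P -> P).

Hypothesis admissible_identity : forall x y z : P,
  3%:R *: (mul (mul x y) z - mul x (mul y z)) =
    mul (mul x z) y + mul (mul y z) x - mul (mul y x) z - mul (mul z x) y.

Variable X : P.

Local Notation N := (npow mul X).

Definition npow_defect (i j : nat) : P := mul (N i) (N j) - N (i + j).+1.

Lemma npow_defect0l (j : nat) : npow_defect 0 j = 0.
Proof. exact: subrr. Qed.

Lemma npow_defect_recursion (m a b : nat) :
  (forall i j, (i + j <= m)%N -> npow_defect i j = 0) -> (a + b = m)%N ->
  3%:R *: npow_defect a.+1 b = npow_defect m.+1 0 - npow_defect a.+1 b.
Proof.
move=> IH Hab.
have npowM_le i j : (i + j <= m)%N -> mul (N i) (N j) = N (i + j).+1.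
  by move=> /IH /eqP; rewrite subr_eq0 => /eqP.
have Eab : mul (N a) (N b) = N m.+1 by rewrite npowM_le Hab.
have EaX : mul (N a) X = N a.+1.
  by move: (npowM_le a 0%N); rewrite addn0; apply; rewrite -Hab leq_addr.
have EbX : mul (N b) X = N b.+1.
  by move: (npowM_le b 0%N); rewrite addn0; apply; rewrite -Hab leq_addl.
have := admissible_identity X (N a) (N b).
rewrite Eab EaX EbX /npow_defect addn0 addSn Hab -/(N a.+1) -/(N m.+2) => ->.
rewrite -/(N b.+1) -[N 0]/X opprB addrA subrK.
by rewrite addrAC (addrC (mul (N b.+1) (N a))) addrK.
Qed.

Hypotheses (char2 : (2%:R : K) != 0) (char3 : (3%:R : K) != 0).

Lemma npow_defect_step (m : nat) :
  (forall i j, (i + j <= m)%N -> npow_defect i j = 0) ->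
  forall a b, (a + b = m)%N -> npow_defect a.+1 b = 0.
Proof.
move=> IH a b Hab.
have top : npow_defect m.+1 0 = 0.
  apply: (scalerI char3); rewrite scaler0.
  by rewrite (npow_defect_recursion IH (addn0 m)) subrr.
have char4 : (4%:R : K) != 0 by rewrite (natrM K 2 2) mulf_neq0.
apply: (scalerI char4); rewrite scaler0.
have -> : (4%:R : K) = 3%:R + 1 by rewrite -natr1.
by rewrite scalerDl scale1r (npow_defect_recursion IH Hab) top sub0r addNr.
Qed.

Lemma npowM (i j : nat) : mul (N i) (N j) = N (i + j).+1.
Proof.
suff defect0 m : forall i j, (i + j <= m)%N -> npow_defect i j = 0.
  by apply/eqP; rewrite -subr_eq0; apply/eqP/(defect0 (i + j)%N).
elim: m => [|m IH] [|a] b; rewrite ?npow_defect0l //.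
rewrite leq_eqVlt ltnS => /orP[/eqP Hab|]; last exact: IH.
by apply: (npow_defect_step IH); move: Hab; rewrite addSn => -[].
Qed.

Lemma npow_mulA (i j k : nat) :
  mul (mul (N i) (N j)) (N k) = mul (N i) (mul (N j) (N k)).
Proof. by rewrite !npowM -addSnnS addnA. Qed.

End PowerAssociativity.

Theorem mainTheorem3 (K : fieldType) (P : lmodType K) (mul : P -> P -> P) :
  (2%:R : K) != 0 -> (3%:R : K) != 0 ->
  admissible_poisson mul ->
  forall X : P,
    (forall i j : nat,
        mul (npow mul X i) (npow mul X j) = npow mul X (i + j).+1) /\
    (forall i j k : nat,
        mul (mul (npow mul X i) (npow mul X j)) (npow mul X k) =
        mul (npow mul X i) (mul (npow mul X j) (npow mul X k))).
Proof.
move=> char2 char3 [_ admissible_identity] X.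
split; [exact: npowM | exact: npow_mulA].
Qed.
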